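(* Let $\alpha \in [0,1)$ and $k \in \{0,\dots,m-1\}$, and let $\mathbf{S}_k = (S_k,\dots,S_k)$. For every monotone total order $T$ on $\Omega$, $$B_{T_h}^*(\mathbf{S}_k) \le B_T^*(\mathbf{S}_k) \le B_{T_\ell}^*(\mathbf{S}_k);$$ that is, among all pessimal bounds $B_T^*$ for monotone total orders $T$, the value at $\mathbf{S}_k$ is lowest for $T = T_h$ and highest for $T = T_\ell$.
   Context: Fix integers $m \ge 2$, $n \ge 1$ and reals $S_{\min} < S_{\max}$; $S = \{S_0,\dots,S_{m-1}\}$ with $S_k = S_{\min} + k\frac{S_{\max}-S_{\min}}{m-1}$. $\mathcal{F}$ is the set of probability distributions on $S$, identified with the probability simplex in $\mathbb{R}^m$ with the Euclidean topology; $E[F]$ is the mean. $\Omega$ is the set of samples of size $n$ from $S$, identified with their sorted versions $x_{(1)} \le \dots \le x_{(n)}$. $P_F[\Omega']$ is the probability that the sorted sample of $n$ i.i.d. draws from $F$ lies in $\Omega' \subseteq \Omega$; $\mathcal{G}(\Omega',\alpha) = \{F : P_F[\Omega'] > \alpha\}$ and $\mathcal{F}(\Omega',\alpha)$ is its closure. For a total order $T$ on $\Omega$, $\Omega(\mathbf{x},T) = \{\mathbf{y} : \mathbf{x} \le_T \mathbf{y}\}$ and the pessimal (conditionally optimal) bound is $B_T^*(\mathbf{x}) = \min\{E[F] : F \in \mathcal{F}(\Omega(\mathbf{x},T),\alpha)\}$ (standing assumption: the sets involved are nonempty). $\mathbf{x} \le \mathbf{y}$ means $x_{(j)} \le y_{(j)}$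 for all $j$; $T$ is monotone if $\mathbf{x} \le \mathbf{y}$ implies $\mathbf{x} \le_T \mathbf{y}$. $T_\ell$ (low lexicographic): $\mathbf{x} \le_{T_\ell} \mathbf{y}$ iff $\mathbf{x}=\mathbf{y}$ or at the smallest index $j$ with $x_{(j)} \ne y_{(j)}$ we have $x_{(j)} < y_{(j)}$. $T_h$ (high lexicographic): same with the largest such index. *)

From mathcomp Require Import all_boot all_order all_algebra.
From mathcomp Require Import all_classical all_reals all_analysis.
Set Implicit Arguments. Unset Strict Implicit. Unset Printing Implicit Defensive.
Import Order.TTheory GRing.Theory Num.Theory.
Import numFieldTopology.Exports numFieldNormedType.Exports.
Local Open Scope ring_scope.
Local Open Scope classical_set_scope.

(* The order on indices 'I_m (S_k is strictly increasing in k). *)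
Definition ordle (m : nat) (a b : 'I_m) : bool := (a <= b)%N.

Lemma ordle_total (m : nat) : total (@ordle m).
Proof. by move=> a b; rewrite /ordle leq_total. Qed.

Definition Spt (R : realType) (m : nat) (Smin Smax : R) (k : 'I_m) : R :=
  Smin + (k : nat)%:R * ((Smax - Smin) / (m.-1)%:R).

(* Omega: samples of size n from S, identified with their sorted versions;
   a sample is recorded through the indices of its points in S. *)
Definition Omega (m n : nat) := {t : n.-tuple 'I_m | sorted (@ordle m) t}.

Definition sortO (m n : nat) (t : n.-tuple 'I_m) : Omega m n :=
  exist _ (sort_tuple (@ordle m) t) (sort_sorted (@ordle_total m) t).

Definition xval (R : realType) (m n : nat) (Smin Smax : R)
  (x : Omega m n) (j : 'I_n) : R := Spt Smin Smax (tnth (sval x) j).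

Lemma nseq_sorted (m n : nat) (k : 'I_m) : sorted (@ordle m) (nseq_tuple n k).
Proof.
rewrite /=; elim: n => [|n IH] //=; case: n IH => //= n ->.
by rewrite /ordle leqnn.
Qed.

Definition constO (m n : nat) (k : 'I_m) : Omega m n :=
  exist _ (nseq_tuple n k) (nseq_sorted n k).

Definition is_distr (R : realType) (m : nat) (F : 'rV[R]_m) : Prop :=
  (forall i, 0 <= F 0 i) /\ \sum_i F 0 i = 1.

Definition mean (R : realType) (m : nat) (Smin Smax : R) (F : 'rV[R]_m) : R :=
  \sum_i F 0 i * Spt Smin Smax i.

Definition probO (R : realType) (m n : nat) (F : 'rV[R]_m)
  (A : pred (Omega m n)) : R :=
  \sum_(t : n.-tuple 'I_m | sortO t \in A) \prod_(j < n) F 0 (tnth t j).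

Definition Gset (R : realType) (m n : nat) (A : pred (Omega m n)) (alpha : R)
  : set 'rV[R]_m := [set F | is_distr F /\ alpha < probO F A].

Definition Fset (R : realType) (m n : nat) (A : pred (Omega m n)) (alpha : R)
  : set 'rV[R]_m := closure (Gset A alpha).

Definition OmegaT (m n : nat) (T : rel (Omega m n)) (x : Omega m n)
  : pred (Omega m n) := fun y => T x y.

(* Pessimal bound B_T^*(x) = min { E[F] : F in F(Omega(x,T), alpha) }
   (the minimum exists: closed bounded set, continuous mean; written as inf). *)
Definition Bstar (R : realType) (m n : nat) (Smin Smax alpha : R)
  (T : rel (Omega m n)) (x : Omega m n) : R :=
  inf [set mean Smin Smax F | F in Fset (OmegaT T x) alpha].

Definition total_order (m n : nat) (T : rel (Omega m n)) : Prop :=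
  [/\ reflexive T, antisymmetric T, transitive T & total T].

Definition monotone_order (R : realType) (m n : nat) (Smin Smax : R)
  (T : rel (Omega m n)) : Prop :=
  forall x y : Omega m n,
    (forall j, xval Smin Smax x j <= xval Smin Smax y j) -> T x y.

Definition Tlow (R : realType) (m n : nat) (Smin Smax : R) : rel (Omega m n) :=
  fun x y => (x == y) ||
    [exists j : 'I_n,
       [forall i : 'I_n, (i < j)%N ==> (xval Smin Smax x i == xval Smin Smax y i)]
       && (xval Smin Smax x j < xval Smin Smax y j)].

Definition Thigh (R : realType) (m n : nat) (Smin Smax : R) : rel (Omega m n) :=
  fun x y => (x == y) ||
    [exists j : 'I_n,
       [forall i : 'I_n, (j < i)%N ==> (xval Smin Smax x i == xval Smin Smax y i)]
       && (xval Smin Smax x j < xval Smin Smax y j)].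

(* The three bounds are infima of E[F] over the closures F(Omega(S_k, .), alpha),
   and these sets grow with the upper set Omega(S_k, .), so it suffices that
   Omega(S_k, T_l) ⊆ Omega(S_k, T) ⊆ Omega(S_k, T_h). If S_k <=_{T_l} y then
   S_k <= y_(1) <= ... <= y_(n), so S_k <=_T y as T is monotone. If S_k <=_T y
   and y_(n) > S_k, then S_k <=_{T_h} y at the last index; otherwise y <= S_k,
   so y <=_T S_k and y = S_k by antisymmetry. The point mass at S_k keeps the
   smallest of the three sets nonempty, so no infimum is taken over nothing. *)
From mathcomp Require Import all_boot all_order all_algebra.
From mathcomp Require Import all_classical all_reals all_analysis.
Set Implicit Arguments. Unset Strict Implicit. Unset Printing Implicit Defensive.
Import Order.TTheory GRing.Theory Num.Theory.
Import numFieldTopology.Exports numFieldNormedType.Exports.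
Local Open Scope ring_scope.
Local Open Scope classical_set_scope.

Section SampleProbabilities.
Variables (R : realType) (m n : nat).

Lemma probO_subset (F : 'rV[R]_m) (A B : pred (Omega m n)) :
  (forall i, 0 <= F 0 i) -> (forall y, A y -> B y) -> probO F A <= probO F B.
Proof.
move=> F_ge0 AB; rewrite /probO [leLHS]big_mkcond [leRHS]big_mkcond /=.
apply: ler_sum => t _; rewrite !unfold_in.
case: ifP => [/AB -> // | _]; case: ifP => // _.
by apply: prodr_ge0 => j _; exact: F_ge0.
Qed.

Lemma Fset_subset (A B : pred (Omega m n)) (alpha : R) :
  (forall y, A y -> B y) -> Fset A alpha `<=` Fset B alpha.
Proof.
move=> AB; apply: closureS => F [F_distr ltFA]; split=> //.
apply: (lt_le_trans ltFA); exact: probO_subset F_distr.1 AB.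
Qed.

Definition point_mass (k : 'I_m) : 'rV[R]_m := \row_i (i == k)%:R.

Lemma point_mass_distr (k : 'I_m) : is_distr (point_mass k).
Proof.
split=> [i|]; first by rewrite mxE ler0n.
under eq_bigr do rewrite mxE.
by rewrite (bigD1 k) //= eqxx big1 ?addr0 // => i /negbTE ->.
Qed.

Lemma prod_point_mass (k : 'I_m) (t : n.-tuple 'I_m) :
  \prod_(j < n) point_mass k 0 (tnth t j) = (t == nseq_tuple n k)%:R.
Proof.
under eq_bigr do rewrite mxE.
have [-> | t_ne] := eqVneq t (nseq_tuple n k).
  by rewrite big1 // => j _; rewrite tnth_nseq eqxx.
have [j t_jk] : exists j, tnth t j != k.
  apply/existsP; apply: contra_neqT t_ne => /existsPn all_k.
  by apply: eq_from_tnth => j; rewrite tnth_nseq; apply/eqP/negbNE.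
by rewrite (bigD1 j) //= (negbTE t_jk) mul0r.
Qed.

Lemma sortO_nseq (k : 'I_m) : sortO (nseq_tuple n k) = constO n k.
Proof.
do 2!apply: val_inj; apply: sorted_sort; last exact: nseq_sorted.
by move=> a b c; exact: leq_trans.
Qed.

Lemma probO_point_mass (k : 'I_m) (A : pred (Omega m n)) :
  probO (point_mass k) A = (constO n k \in A)%:R.
Proof.
rewrite /probO; under eq_bigr do rewrite prod_point_mass.
rewrite big_mkcond (bigD1 (nseq_tuple n k)) //= eqxx sortO_nseq.
rewrite big1 ?addr0; first by case: (_ \in A).
by move=> t /negbTE ->; rewrite if_same.
Qed.

Lemma Fset_point_mass (k : 'I_m) (A : pred (Omega m n)) (alpha : R) :
  constO n k \in A -> alpha < 1 -> Fset A alpha (point_mass k).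
Proof.
move=> Ak alpha_lt1; apply: subset_closure; split; first exact: point_mass_distr.
by rewrite probO_point_mass Ak.
Qed.

End SampleProbabilities.

Section PessimalBounds.
Variables (R : realType) (m n : nat) (Smin Smax : R).
Hypothesis Smin_le_Smax : Smin <= Smax.

Lemma Spt_ge_min (k : 'I_m) : Smin <= Spt Smin Smax k.
Proof. by rewrite /Spt lerDl mulr_ge0 ?divr_ge0 ?subr_ge0. Qed.

Lemma mean_continuous : continuous (mean Smin Smax : 'rV[R]_m -> R).
Proof.
have -> : mean Smin Smax = \sum_i (fun F : 'rV[R]_m => F 0 i * Spt Smin Smax i).
  by apply: funext => F; rewrite fct_sumE.
elim/big_ind: _ => [x|f g cf cg x|i _ x]; first exact: cst_continuous.
  by apply: continuousD; [exact: cf | exact: cg].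
apply: (@continuousM R _ (fun F : 'rV[R]_m => F 0 i) (fun=> Spt Smin Smax i)).
  exact: coord_continuous.
exact: cst_continuous.
Qed.

Lemma Fset_mean_ge (A : pred (Omega m n)) (alpha : R) (F : 'rV[R]_m) :
  Fset A alpha F -> Smin <= mean Smin Smax F.
Proof.
have closed_ge_min : closed [set G : 'rV[R]_m | Smin <= mean Smin Smax G].
  apply: (@preimage_closed _ _ (mean Smin Smax) [set x | Smin <= x]).
    by move=> G _; exact: mean_continuous.
  exact: closed_ge.
move=> FA_F; suff : [set G | Smin <= mean Smin Smax G] F by [].
rewrite ((closure_id _).1 closed_ge_min).
apply: closureS FA_F => G [[G_ge0 G_sum1] _].
rewrite /= /mean -[leLHS]mul1r -G_sum1 mulr_suml.
by apply: ler_sum => i _; rewrite ler_wpM2l ?G_ge0 ?Spt_ge_min.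
Qed.

Lemma Bstar_antitone (alpha : R) (T T' : rel (Omega m n)) (x : Omega m n) :
  (forall y, T x y -> T' x y) -> Fset (OmegaT T x) alpha !=set0 ->
  Bstar Smin Smax alpha T' x <= Bstar Smin Smax alpha T x.
Proof.
move=> TT' [F FT]; apply: lb_le_inf; first by exists (mean Smin Smax F), F.
move=> _ [G GT <-]; apply: ge_inf; last first.
  by exists G => //; exact: Fset_subset GT.
by exists Smin => _ [H HT' <-]; exact: Fset_mean_ge HT'.
Qed.

End PessimalBounds.

Section MonotoneOrders.
Variables (R : realType) (m n : nat) (Smin Smax : R).
Hypotheses (m_ge2 : (2 <= m)%N) (Smin_lt_Smax : Smin < Smax).

Lemma Spt_step_gt0 : 0 < (Smax - Smin) / (m.-1)%:R.
Proof. by rewrite divr_gt0 ?subr_gt0 // ltr0n -ltnS prednK // ltnW. Qed.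

Lemma Spt_le (a b : 'I_m) : (Spt Smin Smax a <= Spt Smin Smax b) = (a <= b)%N.
Proof. by rewrite /Spt lerD2l ler_pM2r ?Spt_step_gt0 // ler_nat. Qed.

Lemma Spt_lt (a b : 'I_m) : (Spt Smin Smax a < Spt Smin Smax b) = (a < b)%N.
Proof. by rewrite /Spt ltrD2l ltr_pM2r ?Spt_step_gt0 // ltr_nat. Qed.

Lemma Spt_inj : injective (Spt Smin Smax : 'I_m -> R).
Proof. by move=> a b /eqP; rewrite eq_le !Spt_le -eqn_leq => /eqP /val_inj. Qed.

Lemma tnth_Omega_le (y : Omega m n) (i j : 'I_n) :
  (i <= j)%N -> (tnth (sval y) i <= tnth (sval y) j)%N.
Proof.
move=> le_ij; set x0 := tnth (sval y) i.
rewrite (tnth_nth x0 _ j) {1}/x0 (tnth_nth x0).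
have ordle_trans : transitive (@ordle m) by move=> a b c; exact: leq_trans.
apply: (sorted_leq_nth ordle_trans (fun a => leqnn a) _ (svalP y)) => //.
all: by rewrite inE size_tuple.
Qed.

Variable k : 'I_m.

Lemma xval_constO (j : 'I_n) : xval Smin Smax (constO n k) j = Spt Smin Smax k.
Proof. by rewrite /xval tnth_nseq. Qed.

Lemma Tlow_constO_sub (T : rel (Omega m n)) (y : Omega m n) :
  monotone_order Smin Smax T -> Tlow Smin Smax (constO n k) y -> T (constO n k) y.
Proof.
move=> T_mono /orP[/eqP <- | /existsP[j /andP[/forallP eq_before lt_j]]].
  exact: T_mono.
apply: T_mono => i; rewrite xval_constO /xval Spt_le.
have n_gt0 : (0 < n)%N by case: (n) i => [[]|].
pose first_ix : 'I_n := Ordinal n_gt0.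
apply: (@leq_trans (tnth (sval y) first_ix)); last exact: tnth_Omega_le.
rewrite xval_constO /xval Spt_lt in lt_j.
have [j0 | j_gt0] := posnP j.
  have -> : first_ix = j by apply: val_inj; rewrite /= j0.
  exact: ltnW.
have := implyP (eq_before first_ix) j_gt0.
by rewrite xval_constO /xval => /eqP /Spt_inj ->.
Qed.

Lemma sub_Thigh_constO (T : rel (Omega m n)) (y : Omega m n) :
  (0 < n)%N -> total_order T -> monotone_order Smin Smax T ->
  T (constO n k) y -> Thigh Smin Smax (constO n k) y.
Proof.
move=> n_gt0 [_ T_anti _ _] T_mono Tky; rewrite /Thigh; apply/orP.
have lt_pred_n : (n.-1 < n)%N by rewrite ltn_predL.
pose last_ix : 'I_n := Ordinal lt_pred_n.
have [k_lt_last | last_le_k] := ltnP k (tnth (sval y) last_ix).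
  right; apply/existsP; exists last_ix; rewrite xval_constO /xval Spt_lt k_lt_last andbT.
  apply/forallP => i; apply/implyP => /= last_lt_i.
  by rewrite ltnNge -ltnS prednK // ltn_ord in last_lt_i.
left; apply/eqP/T_anti; rewrite Tky; apply: T_mono => j.
rewrite xval_constO /xval Spt_le; apply: leq_trans _ last_le_k.
by apply: tnth_Omega_le; rewrite /= -ltnS prednK.
Qed.

End MonotoneOrders.

Theorem corollary1 (R : realType) (m n : nat) (Smin Smax alpha : R)
  (k : 'I_m) (T : rel (Omega m n)) :
  (2 <= m)%N -> (1 <= n)%N -> Smin < Smax -> 0 <= alpha < 1 ->
  total_order T -> monotone_order Smin Smax T ->
  Bstar Smin Smax alpha (Thigh Smin Smax) (constO n k)
    <= Bstar Smin Smax alpha T (constO n k)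
  /\ Bstar Smin Smax alpha T (constO n k)
    <= Bstar Smin Smax alpha (Tlow Smin Smax) (constO n k).
Proof.
move=> m_ge2 n_gt0 Smin_lt_Smax /andP[_ alpha_lt1] T_total T_mono.
have Smin_le_Smax := ltW Smin_lt_Smax.
have Tlow_sub y : Tlow Smin Smax (constO n k) y -> T (constO n k) y.
  exact: Tlow_constO_sub.
have Fset_Tlow : Fset (OmegaT (Tlow Smin Smax) (constO n k)) alpha !=set0.
  exists (point_mass R k); apply: Fset_point_mass alpha_lt1.
  by rewrite unfold_in /OmegaT /Tlow eqxx.
split; apply: Bstar_antitone => //.
- by move=> y; exact: sub_Thigh_constO.
- by case: Fset_Tlow => F /(Fset_subset Tlow_sub); exists F.
Qed.
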